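(* Let $K$ be a field, $\alpha$ an ordinal and $0<n<\omega$. Then the $K$-algebra $B_{\alpha,n}$ has a conormed strong multiplicative basis.
   Context: For a sequence $\mathcal R=(R_i\mid i\in A)$ of $K$-algebras indexed by an infinite set $A$, $R(A,K,\mathcal R)$ is the $K$-subalgebra $\bigoplus_{i\in A}R_i\oplus1_P\cdot K$ of $P=\prod_{i\in A}R_i$; $\boxplus$ is ring direct product. Define $B_{0,1}=K$; $B_{\beta+1,1}=R(\aleph_0,K,\mathcal R)$ with $\mathcal R$ the constant sequence $R_m=B_{\beta,1}$ ($m<\aleph_0$); for limit $\alpha$, $B_{\alpha,1}=R(\alpha,K,(B_{\beta,1}\mid\beta<\alpha))$; $B_{\alpha,n}=B_{\alpha,1}\boxplus\cdots\boxplus B_{\alpha,1}$ ($n$ copies). Socle sequence: $S_0=0$, $S_{\alpha+1}/S_\alpha=\mathrm{Soc}(R/S_\alpha)$, unions at limits; Loewy length $\sigma+1$ means $S_{\sigma+1}=R\ne S_\sigma$. A $K$-basis $B$ is strong multiplicative if $bb'\in B$ for all $b,b'\in B$; it is conormed if it contains a $K$-basis of $S_\gamma$ for each $\gamma\le\sigma$. *)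

From mathcomp Require Import all_boot all_algebra.
Set Implicit Arguments. Unset Strict Implicit. Unset Printing Implicit Defensive.
Import GRing.Theory.
Local Open Scope ring_scope.

Definition is_wellorder (T : Type) (lt : T -> T -> Prop) : Prop :=
  [/\ well_founded lt, (forall x, ~ lt x x),
      (forall x y z, lt x y -> lt y z -> lt x z) &
      (forall x y, lt x y \/ x = y \/ lt y x)].

Section OrdKinds.
Variables (T : Type) (lt : T -> T -> Prop).
Definition is_zero (a : T) : Prop := forall v, ~ lt v a.
Definition is_pred (p a : T) : Prop := lt p a /\ (forall v, lt v a -> lt v p \/ v = p).
Definition is_limit (a : T) : Prop := ~ is_zero a /\ (forall p, ~ is_pred p a).
End OrdKinds.

(** B_{a,1} is realised concretely as a K-subalgebra of the algebra of all
  functions (pointwise operations) from "paths" [seq (T + nat)] to K: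
  the path [::] is the unique point for a = 0; a point of
  B_{p+1,1} = R(aleph_0, K, (B_{p,1})_m) is (inr m :: s) with s a point of B_{p,1};
  a point of B_{a,1} = R(a, K, (B_{b,1})_{b<a}) (a limit) is (inl b :: s) with
  b < a and s a point of B_{b,1}. The product prod_i R_i is thus the
  algebra of functions on the disjoint union of the point sets. *)

Definition label (T : Type) := (T + nat)%type.

Fixpoint inList (T : Type) (x : T) (l : seq T) : Prop :=
  if l is y :: l' then y = x \/ inList x l' else False.

Section Balg.
Variables (T : Type) (lt : T -> T -> Prop) (K : fieldType).

Inductive valid : T -> seq (label T) -> Prop :=
| valid_zero a : is_zero lt a -> valid a [::]
| valid_succ a p m s : is_pred lt p a -> valid p s -> valid a (inr m :: s)
| valid_lim a b s : is_limit lt a -> lt b a -> valid b s -> valid a (inl b :: s).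

Definition isConst (a : T) (c : K) (g : seq (label T) -> K) : Prop :=
  forall s, (valid a s -> g s = c) /\ (~ valid a s -> g s = 0).

Inductive inB : T -> (seq (label T) -> K) -> Prop :=
| inB_zero a f : is_zero lt a -> (forall s, s <> [::] -> f s = 0) -> inB a f
| inB_succ a p f (c : K) (N : nat) :
    is_pred lt p a -> f [::] = 0 -> (forall b s, f (inl b :: s) = 0) ->
    (forall m, inB p (fun s => f (inr m :: s))) ->
    (forall m, (N <= m)%N -> isConst p c (fun s => f (inr m :: s))) ->
    inB a f
| inB_lim a f (c : K) (l : seq T) :
    is_limit lt a -> f [::] = 0 -> (forall m s, f (inr m :: s) = 0) ->
    (forall b s, ~ lt b a -> f (inl b :: s) = 0) ->
    (forall b, lt b a -> inB b (fun s => f (inl b :: s))) ->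
    (forall b, lt b a -> ~ inList b l -> isConst b c (fun s => f (inl b :: s))) ->
    inB a f.

Definition Bn (a : T) (n : nat) (f : 'I_n * seq (label T) -> K) : Prop :=
  forall i : 'I_n, inB a (fun s => f (i, s)).

End Balg.

Section AlgNotions.
Variables (K : fieldType) (Y : Type).
Notation fn := (Y -> K).
Notation fset := (fn -> Prop).

Definition subset_f (P Q : fset) : Prop := forall x, P x -> Q x.

Definition lin_indep (B : fset) : Prop :=
  forall (n : nat) (v : 'I_n -> fn) (c : 'I_n -> K),
    injective v -> (forall i, B (v i)) ->
    (forall t, \sum_(i < n) c i * v i t = 0) -> forall i, c i = 0.

Definition spans (B A : fset) : Prop :=
  forall x, A x -> exists (n : nat) (v : 'I_n -> fn) (c : 'I_n -> K),
    (forall i, B (v i)) /\ (forall t, x t = \sum_(i < n) c i * v i t).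

Definition is_basis (A B : fset) : Prop :=
  [/\ subset_f B A, lin_indep B & spans B A].

Definition strong_mult (B : fset) : Prop :=
  forall b b', B b -> B b' -> B (fun t => b t * b' t).

Definition ideal (A I : fset) : Prop :=
  [/\ subset_f I A, I (fun _ => 0),
      (forall x y, I x -> I y -> I (fun t => x t - y t)) &
      (forall r x, A r -> I x -> I (fun t => r t * x t))].

(* J/S is a minimal (nonzero) ideal of A/S, via the correspondence theorem *)
Definition minimal_over (A S J : fset) : Prop :=
  [/\ ideal A J, subset_f S J, (exists x, J x /\ ~ S x) &
      (forall J', ideal A J' -> subset_f S J' -> subset_f J' J ->
         subset_f J' S \/ subset_f J J')].

(* preimage in A of Soc(A/S): S + sum of the ideals J with J/S minimal in A/S *)
Definition soc_next (A S : fset) : fset := fun x =>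
  A x /\ exists (n : nat) (J : 'I_n -> fset) (y : 'I_n -> fn) (s : fn),
    [/\ S s, (forall i, minimal_over A S (J i) /\ J i (y i)) &
        (forall t, x t = s t + \sum_(i < n) y i t)].

Definition socle_seq (A : fset) (W : Type) (ltW : W -> W -> Prop) (S : W -> fset) : Prop :=
  forall w x,
    [/\ (is_zero ltW w -> (S w x <-> forall t, x t = 0)),
        (forall p, is_pred ltW p w -> (S w x <-> soc_next A (S p) x)) &
        (is_limit ltW w -> (S w x <-> exists v, ltW v w /\ S v x))].

Definition conormed (A B : fset) : Prop :=
  forall (W : Type) (ltW : W -> W -> Prop), is_wellorder ltW ->
  forall S : W -> fset, socle_seq A ltW S ->
  forall w : W, exists C : fset, subset_f C B /\ is_basis (S w) C.

End AlgNotions.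

From Stdlib Require Import Classical ClassicalEpsilon FunctionalExtensionality PropExtensionality.
From mathcomp Require Import all_boot all_algebra.

(* A point of [B_{alpha,1}] is a maximal path down a well-founded tree whose nodes carry levels
   [beta <= alpha]; at every node an element is, on all but finitely many children, constant,
   and this eventual value is its augmentation at the node.  For a down-closed set [D] of
   levels, the elements whose augmentation vanishes at every node of level outside [D] form an
   ideal [I_D], spanned by the indicators of the cones at the nodes of level in [D].  The socle
   sequence is [S_gamma = I_(D_gamma)], where [D_(gamma+1)] adds to [D_gamma] the levels all of
   whose predecessors lie in [D_gamma]: at such a level the cone indicators generate minimal
   ideals over [I_D], and every minimal ideal over [I_D] lies in [I_(D_(gamma+1))].  Adjoining
   one fixed point to every cone makes the cone indicators closed under products (two cones are
   nested or disjoint); the result is triangular with respect to path length, hence linearly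
   independent, and it contains a basis of every [I_D]. *)

Set Implicit Arguments. Unset Strict Implicit. Unset Printing Implicit Defensive.
Import GRing.Theory.
Local Open Scope ring_scope.

Lemma ext_pred (A B : Type) (P : (A -> B) -> Prop) (f g : A -> B) : P f -> f =1 g -> P g.
Proof. by move=> Pf /functional_extensionality <-. Qed.

Section WellOrder.
Variables (X : Type) (ltX : X -> X -> Prop).
Hypothesis wo : is_wellorder ltX.

Definition leX x y := ltX x y \/ x = y.

Lemma wo_wf : well_founded ltX. Proof. by case: wo. Qed.
Lemma wo_ltxx x : ~ ltX x x. Proof. by case: wo. Qed.
Lemma wo_lt_trans y x z : ltX x y -> ltX y z -> ltX x z.
Proof. by case: wo => _ _ + _; apply. Qed.
Lemma wo_trichotomy x y : ltX x y \/ x = y \/ ltX y x. Proof. by case: wo. Qed.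

Lemma wo_lt_asym x y : ltX x y -> ~ ltX y x.
Proof. by move=> xy /(wo_lt_trans xy); apply: wo_ltxx. Qed.
Lemma wo_le_lt_trans y x z : leX x y -> ltX y z -> ltX x z.
Proof. by case=> [|->] // xy; apply: wo_lt_trans. Qed.
Lemma wo_lt_le_trans y x z : ltX x y -> leX y z -> ltX x z.
Proof. by move=> xy [|<-] // yz; apply: wo_lt_trans yz. Qed.
Lemma wo_le_trans y x z : leX x y -> leX y z -> leX x z.
Proof. by case=> [xy yz|->] //; left; apply: wo_lt_le_trans yz. Qed.
Lemma wo_nlt_le x y : ~ ltX x y -> leX y x.
Proof. by case: (wo_trichotomy x y) => [//|[->|]]; [right|left]. Qed.
Lemma wo_le_nlt x y : leX x y -> ~ ltX y x.
Proof. by case=> [/wo_lt_asym|->] //; apply: wo_ltxx. Qed.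
Lemma wo_le_total x y : leX x y \/ leX y x.
Proof. by case: (wo_trichotomy x y) => [|[->|]]; [left; left|left; right|right; left]. Qed.

Lemma ordinal_cases a : is_zero ltX a \/ (exists p, is_pred ltX p a) \/ is_limit ltX a.
Proof.
case: (classic (is_zero ltX a)) => [|a_nz]; first by left.
case: (classic (exists p, is_pred ltX p a)) => [|no_pred]; first by right; left.
by right; right; split=> // p p_a; apply: no_pred; exists p.
Qed.

Lemma zero_not_pred a p : is_zero ltX a -> ~ is_pred ltX p a.
Proof. by move=> a0 [/a0]. Qed.
Lemma limit_not_pred a p : is_limit ltX a -> ~ is_pred ltX p a.
Proof. by case=> _; apply. Qed.
Lemma limit_not_zero a : is_limit ltX a -> ~ is_zero ltX a.
Proof. by case. Qed.

Lemma pred_uniq p q a : is_pred ltX p a -> is_pred ltX q a -> p = q.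
Proof.
move=> [pa p_max] [qa q_max].
case: (p_max _ qa) => [qp|//]; case: (q_max _ pa) => [pq|//].
by case: (wo_lt_asym qp pq).
Qed.

Lemma nonzero_has_lt a : ~ is_zero ltX a -> exists v, ltX v a.
Proof. by move=> a_nz; apply: NNPP => no_lt; apply: a_nz => v va; apply: no_lt; exists v. Qed.

Lemma limit_between a x : is_limit ltX a -> ltX x a -> exists y, ltX x y /\ ltX y a.
Proof.
move=> a_lim xa; apply: NNPP => no_between; apply: (limit_not_pred (p := x) a_lim).
split=> // v va; case: (wo_trichotomy v x) => [|[|xv]]; [by left|by right|].
by case: no_between; exists v.
Qed.

Lemma limit_avoid a l x : is_limit ltX a -> ltX x a ->
  exists b, [/\ leX x b, ltX b a & ~ inList b l].
Proof.
move=> a_lim; elim: l x => [|y l IH] x xa; first by exists x; split=> //; right.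
case: (classic (ltX y a /\ leX x y)) => [[ya xy]|not_above].
  have [y' [yy' y'a]] := limit_between a_lim ya.
  have [b [y'b ba b_l]] := IH _ y'a.
  exists b; split=> //=; first by left; apply: wo_le_lt_trans xy (wo_lt_le_trans yy' y'b).
  by case=> [yb|//]; subst y; apply: wo_le_nlt y'b yy'.
have [b [xb ba b_l]] := IH _ xa.
by exists b; split=> //= -[yb|//]; subst y; apply: not_above.
Qed.

End WellOrder.

Definition is_prefix (A : Type) (s t : seq A) := exists w, t = s ++ w.

Section Prefix.
Variable A : Type.
Implicit Types s t u : seq A.

Lemma is_prefix_refl s : is_prefix s s. Proof. by exists [::]; rewrite cats0. Qed.
Lemma is_prefix_nil s : is_prefix [::] s. Proof. by exists s. Qed.
Lemma is_prefix_catr s t : is_prefix s (s ++ t). Proof. by exists t. Qed.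

Lemma is_prefix_cons (x y : A) s t : is_prefix (x :: s) (y :: t) <-> x = y /\ is_prefix s t.
Proof. by split=> [[w [-> ->]]|[-> [w ->]]]; [split=> //; exists w|exists w]. Qed.

Lemma is_prefix_cat2l u s t : is_prefix (u ++ s) (u ++ t) <-> is_prefix s t.
Proof. by elim: u => //= x u IH; rewrite is_prefix_cons IH; split=> // -[]. Qed.

Lemma is_prefix_trans t s u : is_prefix s t -> is_prefix t u -> is_prefix s u.
Proof. by case=> w -> [w' ->]; exists (w ++ w'); rewrite catA. Qed.

Lemma is_prefix_total s u t : is_prefix s t -> is_prefix u t -> is_prefix s u \/ is_prefix u s.
Proof.
elim: s u t => [|x s IH] u t; first by left; apply: is_prefix_nil.
case: u => [|y u]; first by right; apply: is_prefix_nil.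
case: t => [|z t]; first by case.
move=> /is_prefix_cons[<- st] /is_prefix_cons[<- ut].
by case: (IH _ _ st ut) => ?; [left|right]; apply/is_prefix_cons.
Qed.

Lemma is_prefix_size s t : is_prefix s t -> (size s <= size t)%N.
Proof. by case=> w ->; rewrite size_cat leq_addr. Qed.

Lemma is_prefix_size_eq s t : is_prefix s t -> size s = size t -> s = t.
Proof.
by case=> w -> /eqP; rewrite size_cat -{1}[size s]addn0 eqn_add2l eq_sym => /nilP->; rewrite cats0.
Qed.

End Prefix.

Lemma inList_cat (A : Type) (x : A) l1 l2 : inList x (l1 ++ l2) <-> inList x l1 \/ inList x l2.
Proof. by elim: l1 => [|y l IH] /=; [split; [right|case]|rewrite IH; tauto]. Qed.

Lemma inList_map (A B : Type) (f : A -> B) x l : inList x l -> inList (f x) (map f l).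
Proof. by elim: l => //= y l IH [->|/IH]; [left|right]. Qed.

Lemma inList_mem (A : eqType) (x : A) l : x \in l -> inList x l.
Proof. by elim: l => //= y l IH; rewrite in_cons => /orP[/eqP->|/IH]; [left|right]. Qed.

Section Indicator.
Variable K : fieldType.

Definition ind (P : Prop) : K := if excluded_middle_informative P then 1 else 0.

Lemma indT (P : Prop) : P -> ind P = 1.
Proof. by rewrite /ind; case: excluded_middle_informative. Qed.
Lemma indF (P : Prop) : ~ P -> ind P = 0.
Proof. by rewrite /ind; case: excluded_middle_informative. Qed.

Lemma ind_iff (P Q : Prop) : (P <-> Q) -> ind P = ind Q.
Proof. by move=> PQ; case: (classic P) => p; [rewrite !indT|rewrite !indF]; tauto. Qed.

Lemma ind_and (P Q : Prop) : ind (P /\ Q) = ind P * ind Q.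
Proof.
case: (classic (P /\ Q)) => [[p q]|npq]; first by rewrite !indT ?mulr1.
case: (classic P) => [p|np]; last by rewrite (indF npq) (indF np) mul0r.
by rewrite (indF npq) (indF (P := Q)) ?mulr0 // => q; apply: npq.
Qed.

Lemma ind_idem (P : Prop) : ind P * ind P = ind P.
Proof. by rewrite -ind_and; apply: ind_iff; tauto. Qed.

Lemma ind_or_mul (P Q R : Prop) : ind (P \/ R) * ind (Q \/ R) = ind ((P /\ Q) \/ R).
Proof. by rewrite -ind_and; apply: ind_iff; tauto. Qed.

End Indicator.

Section Span.
Variables (K : fieldType) (Y : Type).
Notation fY := (Y -> K).

Inductive span (B : fY -> Prop) : fY -> Prop :=
| span0 : span B (fun _ => 0)
| span_cons c g f : B g -> span B f -> span B (fun y => c * g y + f y).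

Lemma span_add B f g : span B f -> span B g -> span B (fun y => f y + g y).
Proof.
elim=> [|c h f' Bh _ IH] Sg; first by apply: ext_pred Sg _ => y; rewrite add0r.
by apply: ext_pred (span_cons c Bh (IH Sg)) _ => y; rewrite addrA.
Qed.

Lemma span_scale B k f : span B f -> span B (fun y => k * f y).
Proof.
elim=> [|c h f' Bh _ IH]; first by apply: ext_pred (span0 B) _ => y; rewrite mulr0.
by apply: ext_pred (span_cons (k * c) Bh IH) _ => y; rewrite mulrDr mulrA.
Qed.

Lemma span_gen B g : B g -> span B g.
Proof. by move=> Bg; apply: ext_pred (span_cons 1 Bg (span0 B)) _ => y; rewrite mul1r addr0. Qed.

Lemma span_trans B C f : (forall g, B g -> span C g) -> span B f -> span C f.
Proof.
move=> BC; elim=> [|c g f' Bg _ IH]; first exact: span0.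
by apply: span_add IH; apply: span_scale; apply: BC.
Qed.

Lemma span_sum B m (F : 'I_m -> fY) : (forall i, span B (F i)) ->
  span B (fun y => \sum_(i < m) F i y).
Proof.
elim: m F => [|m IH] F SF; first by apply: ext_pred (span0 B) _ => y; rewrite big_ord0.
have SF' i : span B (F (widen_ord (leqnSn m) i)) by apply: SF.
by apply: ext_pred (span_add (IH _ SF') (SF ord_max)) _ => y; rewrite big_ord_recr.
Qed.

Lemma span_spans B f : span B f ->
  exists (m : nat) (v : 'I_m -> fY) (c : 'I_m -> K),
    (forall i, B (v i)) /\ (forall t, f t = \sum_(i < m) c i * v i t).
Proof.
elim=> [|c g f' Bg _ [m [v [cs [Bv ef]]]]].
  by exists 0%N, (fun _ _ => 0), (fun _ => 0); split=> [[]|t]; rewrite ?big_ord0.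
exists m.+1, (fun i => if unlift ord0 i is Some j then v j else g),
  (fun i => if unlift ord0 i is Some j then cs j else c); split.
  by move=> i; case: (unlift ord0 i).
move=> t; rewrite big_ord_recl /= unlift_none ef; congr (_ + _).
by apply: eq_bigr => i _; rewrite liftK.
Qed.

Lemma ideal_add (A J : fY -> Prop) x y : ideal A J -> J x -> J y -> J (fun t => x t + y t).
Proof.
move=> [_ J0 Jsub _] Jx Jy; apply: ext_pred (Jsub _ _ Jx (Jsub _ _ J0 Jy)) _ => t.
by rewrite sub0r opprK.
Qed.

Lemma lin_indep_sub (B C : fY -> Prop) : subset_f C B -> lin_indep B -> lin_indep C.
Proof. by move=> CB indepB m v c v_inj Cv; apply: indepB => // i; apply: CB. Qed.

End Span.

Section Paths.
Variables (T : Type) (lt : T -> T -> Prop).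
Hypothesis wo : is_wellorder lt.
Notation label := (label T).
Notation le := (leX lt).

Inductive reach : T -> seq label -> T -> Prop :=
| reach_nil a : reach a [::] a
| reach_succ a p m s b : is_pred lt p a -> reach p s b -> reach a (inr m :: s) b
| reach_lim a c s b : is_limit lt a -> lt c a -> reach c s b -> reach a (inl c :: s) b.

Lemma reach_nil_inv a b : reach a [::] b -> a = b.
Proof. by move=> h; inversion h. Qed.
Lemma reach_inr_inv a m s b : reach a (inr m :: s) b -> exists2 p, is_pred lt p a & reach p s b.
Proof. by move=> h; inversion h; subst; exists p. Qed.
Lemma reach_inl_inv a c s b : reach a (inl c :: s) b -> [/\ is_limit lt a, lt c a & reach c s b].
Proof. by move=> h; inversion h; subst. Qed.

Lemma reach_det a s b b' : reach a s b -> reach a s b' -> b = b'.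
Proof.
move=> h; elim: h b' => [a0 b'|a0 p m s0 b0 p_a _ IH b'|a0 c s0 b0 _ _ _ IH b'].
- exact: reach_nil_inv.
- by case/reach_inr_inv=> p' /(pred_uniq wo p_a) <-; apply: IH.
- by case/reach_inl_inv=> _ _; apply: IH.
Qed.

Lemma reach_cat a s t c : reach a (s ++ t) c <-> exists b, reach a s b /\ reach b t c.
Proof.
elim: s a => [|[c0|m] s IH] a /=.
- by split=> [|[b [/reach_nil_inv-> //]]]; exists a; split=> //; constructor.
- split=> [/reach_inl_inv[a_lim ca /IH[b [h1 h2]]]|[b [/reach_inl_inv[a_lim ca h1] h2]]].
    by exists b; split=> //; apply: reach_lim.
  by apply: reach_lim => //; apply/IH; exists b.
- split=> [/reach_inr_inv[p p_a /IH[b [h1 h2]]]|[b [/reach_inr_inv[p p_a h1] h2]]].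
    by exists b; split=> //; apply: reach_succ p_a h1.
  by apply: reach_succ p_a _; apply/IH; exists b.
Qed.

Lemma reach_le a s b : reach a s b -> le b a.
Proof.
elim=> [a0|a0 p m s0 b0 [pa _] _ IH|a0 c s0 b0 _ ca _ IH]; first by right.
- by left; apply: wo_le_lt_trans IH pa.
- by left; apply: wo_le_lt_trans IH ca.
Qed.

Lemma reach_lt a x s b : reach a (x :: s) b -> lt b a.
Proof.
case: x => [c /reach_inl_inv[_ ca /reach_le ba]|m /reach_inr_inv[p [pa _] /reach_le bp]].
- exact: wo_le_lt_trans ba ca.
- exact: wo_le_lt_trans bp pa.
Qed.

Lemma reach_zero_nil a s b : is_zero lt a -> reach a s b -> s = [::].
Proof. by case: s => // x s a0 /reach_lt /a0. Qed.

Lemma valid_reach a s : valid lt a s <-> exists z, reach a s z /\ is_zero lt z.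
Proof.
split.
  elim=> [a0 a_0|a0 p m s0 p_a _ [z [h z0]]|a0 b s0 a_lim ba _ [z [h z0]]].
  - by exists a0; split=> //; constructor.
  - by exists z; split=> //; apply: reach_succ p_a h.
  - by exists z; split=> //; apply: reach_lim a_lim ba h.
case=> z [h]; elim: h => [a0|a0 p m s0 b0 p_a _ IH|a0 c s0 b0 a_lim ca _ IH] z0.
- by constructor.
- exact: valid_succ p_a (IH z0).
- exact: valid_lim a_lim ca (IH z0).
Qed.

Lemma valid_cat a s t : valid lt a (s ++ t) <-> exists b, reach a s b /\ valid lt b t.
Proof.
rewrite valid_reach; split.
  by case=> z [/reach_cat[b [h1 h2]] z0]; exists b; split=> //; apply/valid_reach; exists z.
by case=> b [h1 /valid_reach[z [h2 z0]]]; exists z; split=> //; apply/reach_cat; exists b.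
Qed.

Lemma valid_reach_cat a s b t : reach a s b -> valid lt a (s ++ t) <-> valid lt b t.
Proof.
move=> sab; rewrite valid_cat; split=> [[b' [/(reach_det sab)<- //]]|].
by exists b.
Qed.

Lemma valid_ex a : exists s, valid lt a s.
Proof.
elim: a / (wo_wf wo) => a _ IH.
case: (ordinal_cases lt a) => [a0|[[p p_a]|a_lim]].
- by exists [::]; constructor.
- by have [s ps] := IH p (proj1 p_a); exists (inr 0%N :: s); apply: valid_succ p_a ps.
- have [v va] := nonzero_has_lt (limit_not_zero a_lim).
  by have [s vs] := IH v va; exists (inl v :: s); apply: valid_lim a_lim va vs.
Qed.

Lemma valid_prefix_eq a s t : valid lt a s -> valid lt a t -> is_prefix s t -> s = t.
Proof.
move=> /valid_reach[z [sz z0]] vt [w ew]; subst t.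
move: vt; rewrite (valid_reach_cat _ sz) => /valid_reach[z' [zw _]].
by rewrite (reach_zero_nil z0 zw) cats0.
Qed.

Fixpoint sum_inr (H : seq label) : nat :=
  if H is x :: H' then ((if x is inr m then m else 0) + sum_inr H')%N else 0%N.
Fixpoint inl_labels (H : seq label) : seq T :=
  if H is x :: H' then (if x is inl b then b :: inl_labels H' else inl_labels H') else [::].

Lemma sum_inr_ge m H : inList (inr m) H -> (m <= sum_inr H)%N.
Proof.
elim: H => //= x H IH [->|/IH]; first by rewrite leq_addr.
by move/leq_trans; apply; apply: leq_addl.
Qed.

Lemma inl_labels_in b H : inList (inl b) H -> inList b (inl_labels H).
Proof.
elim: H => //= -[c|m] H IH; first by case=> [[->]|/IH]; [left|right].
by case=> // /IH.
Qed.

Lemma child_above b b' (H : seq label) : lt b' b ->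
  exists x b1, [/\ reach b [:: x] b1, ~ inList x H & le b' b1].
Proof.
move=> b'b; case: (ordinal_cases lt b) => [b0|[[p p_b]|b_lim]]; first by case: (b0 _ b'b).
- exists (inr (sum_inr H).+1), p; split; first by apply: reach_succ p_b _; constructor.
    by move/sum_inr_ge; rewrite ltnn.
  by case: p_b => _ /(_ _ b'b) [|->]; [left|right].
- have [b1 [b'b1 b1b b1H]] := limit_avoid wo (inl_labels H) b_lim b'b.
  exists (inl b1), b1; split=> //; first by apply: reach_lim b_lim b1b _; constructor.
  by move/inl_labels_in.
Qed.

Lemma fresh_child a (H : seq label) : ~ is_zero lt a ->
  exists x b, reach a [:: x] b /\ ~ inList x H.
Proof.
move=> a_nz; have [v va] := nonzero_has_lt a_nz.
by have [x [b [ab xH _]]] := child_above H va; exists x, b.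
Qed.

(* Go down through a child of [b] that differs from the next label of every listed extension
   of [sg]. *)
Lemma avoid_extensions b sg (P : seq (seq label)) :
  exists t, valid lt b t /\ forall q, inList q P -> is_prefix q (sg ++ t) -> is_prefix q sg.
Proof.
case: (classic (is_zero lt b)) => [b0|b_nz].
  by exists [::]; split=> [|q _]; [constructor|rewrite cats0].
pose H := map (fun q => head (inr 0%N) (drop (size sg) q)) P.
have [x [b1 [bx xH]]] := fresh_child H b_nz.
have [t vt] := valid_ex b1.
exists (x :: t); split; first by apply/(valid_reach_cat _ bx).
move=> q qP q_pre; case: (is_prefix_total q_pre (is_prefix_catr sg _)) => [//|[w ew]].
subst q; move: q_pre; rewrite is_prefix_cat2l; case: w qP => [|y w] qP.
  by rewrite cats0 => _; apply: is_prefix_refl.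
case/is_prefix_cons=> ey _; subst y; case: xH.
by move: (inList_map (fun q => head (inr 0%N) (drop (size sg) q)) qP); rewrite drop_size_cat.
Qed.

Section TreeAlgebra.
Variable K : fieldType.
Notation fn := (seq label -> K).
Notation inB := (@inB T lt K).
Notation isConst := (@isConst T lt K).
Notation valid := (valid lt).

Definition oneB a : fn := fun s => ind K (valid a s).

(* The successor and limit clauses of [inB] in a common form. *)
Definition branching a (f : fn) c (H : seq label) :=
  [/\ f [::] = 0, (forall x t, ~ (exists b, reach a [:: x] b) -> f (x :: t) = 0),
      (forall x b, reach a [:: x] b -> inB b (fun t => f (x :: t))) &
      (forall x b, reach a [:: x] b -> ~ inList x H -> isConst b c (fun t => f (x :: t)))].

Lemma inB_zero_vanish a f s : inB a f -> is_zero lt a -> s <> [::] -> f s = 0.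
Proof.
move=> f_a a0 s_nz.
case: f_a a0 => [a' f' _ f_nil|a' p f' c N p_a _ _ _ _|a' f' c l a_lim _ _ _ _ _].
- by move=> _; apply: f_nil.
- by move=> a0; case: (zero_not_pred a0 p_a).
- by move=> a0; case: (limit_not_zero a_lim a0).
Qed.

Lemma inB_branching a f : inB a f -> ~ is_zero lt a -> exists c H, branching a f c H.
Proof.
case=> [a0 f0 a_0 _ //|a0 p f0 c N p_a f_nil f_inl f_ch f_const|
        a0 f0 c l a_lim f_nil f_inr f_out f_ch f_const] _.
- have not_inl (b b0 : T) : ~ reach a0 [:: inl b] b0.
    by move=> /reach_inl_inv[a_lim _ _]; apply: limit_not_pred a_lim p_a.
  exists c, (map inr (iota 0 N)); split=> //.
  + case=> [b|m] t no_child; first exact: f_inl.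
    by case: no_child; exists p; apply: reach_succ p_a _; constructor.
  + case=> [b|m] b0 /[dup]; first by move=> /not_inl.
    by case/reach_inr_inv=> p' /(pred_uniq wo p_a) <- /reach_nil_inv <- _.
  + case=> [b|m] b0 /[dup]; first by move=> /not_inl.
    case/reach_inr_inv=> p' /(pred_uniq wo p_a) <- /reach_nil_inv <- _ m_H.
    apply: f_const; rewrite leqNgt; apply/negP => mN; apply: m_H.
    by apply: inList_map; apply: inList_mem; rewrite mem_iota.
- have not_inr m (b0 : T) : ~ reach a0 [:: inr m] b0.
    by move=> /reach_inr_inv[p /(limit_not_pred a_lim)].
  exists c, (map inl l); split=> //.
  + case=> [b|m] t no_child; last exact: f_inr.
    case: (classic (lt b a0)) => [ba|nba]; last exact: f_out.
    by case: no_child; exists b; apply: reach_lim a_lim ba _; constructor.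
  + case=> [b|m] b0; last by move=> /not_inr.
    by case/reach_inl_inv=> _ ba /reach_nil_inv <-; apply: f_ch.
  + case=> [b|m] b0; last by move=> /not_inr.
    case/reach_inl_inv=> _ ba /reach_nil_inv <- b_H; apply: f_const => // b_l.
    by apply: b_H; apply: inList_map.
Qed.

Lemma branching_inB a f c H : ~ is_zero lt a -> branching a f c H -> inB a f.
Proof.
move=> a_nz [f_nil f_out f_ch f_const].
case: (ordinal_cases lt a) => [//|[[p p_a]|a_lim]].
- have ch m : reach a [:: inr m] p by apply: reach_succ p_a _; constructor.
  apply: (@inB_succ _ _ _ a p f c (sum_inr H).+1) => //.
  + move=> b s; apply: f_out => -[b0 /reach_inl_inv[a_lim _ _]].
    exact: limit_not_pred a_lim p_a.
  + by move=> m; apply: f_ch (ch m).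
  + move=> m Hm; apply: f_const (ch m) _ => /sum_inr_ge.
    by rewrite leqNgt Hm.
- have ch b : lt b a -> reach a [:: inl b] b by move=> ba; apply: reach_lim a_lim ba _; constructor.
  apply: (@inB_lim _ _ _ a f c (inl_labels H)) => //.
  + move=> m s; apply: f_out => -[b0 /reach_inr_inv[p p_a _]].
    exact: limit_not_pred a_lim p_a.
  + by move=> b s nba; apply: f_out => -[b0 /reach_inl_inv[_ ba _]].
  + by move=> b ba; apply: f_ch (ch _ ba).
  + by move=> b ba b_H; apply: f_const (ch _ ba) _ => /inl_labels_in.
Qed.

Lemma isConst_op2 (op : K -> K -> K) a c d f g : op 0 0 = 0 ->
  isConst a c f -> isConst a d g -> isConst a (op c d) (fun s => op (f s) (g s)).
Proof.
move=> op00 fc gd s; have [f1 f2] := fc s; have [g1 g2] := gd s.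
by split=> h; [rewrite f1 // g1|rewrite f2 // g2].
Qed.

Lemma isConst_op1 (u : K -> K) a c f : u 0 = 0 ->
  isConst a c f -> isConst a (u c) (fun s => u (f s)).
Proof. by move=> u0 fc s; have [f1 f2] := fc s; split=> h; [rewrite f1|rewrite f2]. Qed.

Lemma isConst_oneB a : isConst a 1 (oneB a).
Proof. by move=> s; split=> h; [apply: indT|apply: indF]. Qed.

Lemma inB_op2 (op : K -> K -> K) a f g : op 0 0 = 0 ->
  inB a f -> inB a g -> inB a (fun s => op (f s) (g s)).
Proof.
move=> op00; elim: a / (wo_wf wo) f g => a _ IH f g f_a g_a.
case: (classic (is_zero lt a)) => [a0|a_nz].
  apply: inB_zero => // s s_nz.
  by rewrite (inB_zero_vanish f_a a0 s_nz) (inB_zero_vanish g_a a0 s_nz).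
have [c [H [f_nil f_out f_ch f_const]]] := inB_branching f_a a_nz.
have [d [H' [g_nil g_out g_ch g_const]]] := inB_branching g_a a_nz.
apply: (@branching_inB _ _ (op c d) (H ++ H') a_nz); split.
- by rewrite f_nil g_nil.
- by move=> x t no_child; rewrite f_out // g_out.
- by move=> x b ax; apply: IH (reach_lt ax) _ _ (f_ch _ _ ax) (g_ch _ _ ax).
- move=> x b ax /inList_cat x_HH'; apply: isConst_op2 => //.
  + by apply: f_const ax _ => ?; apply: x_HH'; left.
  + by apply: g_const ax _ => ?; apply: x_HH'; right.
Qed.

Lemma inB_op1 (u : K -> K) a f : u 0 = 0 -> inB a f -> inB a (fun s => u (f s)).
Proof. by move=> u0 f_a; apply: (inB_op2 (op := fun x _ => u x) u0 f_a f_a). Qed.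

Lemma valid_child a x b t : reach a [:: x] b -> valid a (x :: t) <-> valid b t.
Proof. exact: (valid_reach_cat _ (s := [:: x])). Qed.

Lemma inB_oneB a : inB a (oneB a).
Proof.
elim: a / (wo_wf wo) => a _ IH.
case: (classic (is_zero lt a)) => [a0|a_nz].
  apply: inB_zero => // s s_nz; apply: indF => /valid_reach[z [az _]].
  exact: s_nz (reach_zero_nil a0 az).
apply: (@branching_inB _ _ 1 [::] a_nz); split.
- by apply: indF => /valid_reach[z [/reach_nil_inv<-]].
- move=> x t no_child; apply: indF => /valid_reach[z [/(reach_cat _ [:: x])[b [ax _]] _]].
  by apply: no_child; exists b.
- move=> x b ax; apply: ext_pred (IH b (reach_lt ax)) _ => t.
  by apply: ind_iff; rewrite (valid_child _ ax).
- move=> x b ax _ t; rewrite /oneB (ind_iff _ (valid_child t ax)).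
  exact: isConst_oneB.
Qed.

Lemma inB0 a : inB a (fun _ => 0).
Proof. exact: (inB_op1 (u := fun _ => 0)) (inB_oneB a). Qed.

Lemma inB_subtree s a b f : inB a f -> reach a s b -> inB b (fun t => f (s ++ t)).
Proof.
elim: s a f => [|x s IH] a f f_a; first by move/reach_nil_inv <-.
case/(reach_cat _ [:: x])=> b1 [ax xb].
have a_nz : ~ is_zero lt a by move=> a0; move: (reach_zero_nil a0 ax).
have [c [H [_ _ f_ch _]]] := inB_branching f_a a_nz.
exact: IH (f_ch _ _ ax) xb.
Qed.

Lemma inB_support a f s : inB a f -> ~ valid a s -> f s = 0.
Proof.
elim: s a f => [|x t IH] a f f_a s_nv.
  have a_nz : ~ is_zero lt a by move=> a0; apply: s_nv; constructor.
  by have [c [H []]] := inB_branching f_a a_nz.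
case: (classic (is_zero lt a)) => [a0|a_nz]; first exact: inB_zero_vanish f_a a0 _.
have [c [H [_ f_out f_ch _]]] := inB_branching f_a a_nz.
case: (classic (exists b, reach a [:: x] b)) => [[b ax]|no_child]; last exact: f_out.
by apply: IH (f_ch _ _ ax) _ => vt; apply: s_nv; apply/(valid_child _ ax).
Qed.

Lemma inB_zero_oneB a g t : is_zero lt a -> inB a g -> g t = g [::] * oneB a t.
Proof.
move=> a0 g_a; case: t => [|x t]; first by rewrite /oneB indT ?mulr1 //; constructor.
rewrite (inB_zero_vanish g_a a0) // /oneB indF ?mulr0 //.
by case/valid_reach=> z [/(reach_zero_nil a0)].
Qed.

Lemma oneB_cat a s b t : reach a s b -> oneB a (s ++ t) = oneB b t.
Proof. by move=> sab; apply: ind_iff; apply: valid_reach_cat. Qed.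

(* The augmentation of [B_a] onto [K]: the coefficient of [1] in
   [R(A, K, R) = (+)_i R_i (+) K 1], i.e. the eventual value of [g] on the children
   (and the value [g [::]] itself when [a] is zero). *)
Definition is_aug a (g : fn) (c : K) :=
  (is_zero lt a -> g [::] = c) /\
  (~ is_zero lt a -> exists H, forall x b, reach a [:: x] b -> ~ inList x H ->
       isConst b c (fun t => g (x :: t))).

Definition aug a (g : fn) : K := epsilon (inhabits 0) (is_aug a g).

Lemma is_aug_uniq a g c d : is_aug a g c -> is_aug a g d -> c = d.
Proof.
move=> [gc0 gc] [gd0 gd]; case: (classic (is_zero lt a)) => [a0|a_nz].
  by rewrite -(gc0 a0) (gd0 a0).
have [[H1 h1] [H2 h2]] := (gc a_nz, gd a_nz).
have [x [b [ax x_H]]] := fresh_child (H1 ++ H2) a_nz.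
have [t vt] := valid_ex b.
have := proj1 (h1 _ _ ax (fun h => x_H (proj2 (inList_cat _ _ _) (or_introl h))) t) vt.
by move=> <-; apply: (proj1 (h2 _ _ ax (fun h => x_H (proj2 (inList_cat _ _ _) (or_intror h))) t)).
Qed.

Lemma is_aug_ex a g : inB a g -> exists c, is_aug a g c.
Proof.
move=> g_a; case: (classic (is_zero lt a)) => [a0|a_nz].
  by exists (g [::]); split.
have [c [H [_ _ _ g_const]]] := inB_branching g_a a_nz.
by exists c; split=> // _; exists H.
Qed.

Lemma isConst_is_aug a c g : isConst a c g -> is_aug a g c.
Proof.
move=> gc; split=> [a0|a_nz]; first exact: (proj1 (gc [::]) (valid_zero a0)).
exists [::] => x b ax _ t; have [g1 g2] := gc (x :: t).
by rewrite !(valid_child _ ax) in g1 g2.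
Qed.

Lemma is_aug_op2 (op : K -> K -> K) a f g c d : op 0 0 = 0 ->
  is_aug a f c -> is_aug a g d -> is_aug a (fun s => op (f s) (g s)) (op c d).
Proof.
move=> op00 [fc0 fc] [gd0 gd]; split=> [a0|a_nz]; first by rewrite fc0 // gd0.
have [[H1 h1] [H2 h2]] := (fc a_nz, gd a_nz).
exists (H1 ++ H2) => x b ax /inList_cat x_H; apply: isConst_op2 => //.
- by apply: h1 ax _ => ?; apply: x_H; left.
- by apply: h2 ax _ => ?; apply: x_H; right.
Qed.

Lemma aug_eq a g c : is_aug a g c -> aug a g = c.
Proof. by move=> gc; apply: is_aug_uniq (epsilon_spec _ _ (ex_intro _ c gc)) gc. Qed.

Lemma aug_is_aug a g : inB a g -> is_aug a g (aug a g).
Proof. by move=> g_a; apply: epsilon_spec; apply: is_aug_ex. Qed.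

Lemma aug_op2 (op : K -> K -> K) a f g : op 0 0 = 0 -> inB a f -> inB a g ->
  aug a (fun s => op (f s) (g s)) = op (aug a f) (aug a g).
Proof. by move=> op00 f_a g_a; apply: aug_eq; apply: is_aug_op2 => //; apply: aug_is_aug. Qed.

Lemma aug_op1 (u : K -> K) a f : u 0 = 0 -> inB a f -> aug a (fun s => u (f s)) = u (aug a f).
Proof. by move=> u0 f_a; apply: (aug_op2 (op := fun x _ => u x) u0 f_a f_a). Qed.

Lemma aug_const a c g : isConst a c g -> aug a g = c.
Proof. by move=> gc; apply: aug_eq; apply: isConst_is_aug. Qed.

Lemma aug_oneB a : aug a (oneB a) = 1.
Proof. exact: aug_const (isConst_oneB a). Qed.

Lemma aug0 a : aug a (fun _ => 0) = 0.
Proof. by apply: aug_const => s; split. Qed.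

Lemma aug_zero a g : is_zero lt a -> aug a g = g [::].
Proof. by move=> a0; apply: aug_eq; split=> // /(_ a0). Qed.

Definition cone a s : fn := fun t => ind K (is_prefix s t /\ valid a t).

Lemma inB_cone a s b : reach a s b -> inB a (cone a s).
Proof.
elim: s a => [|x s IH] a.
  move=> _; apply: ext_pred (inB_oneB a) _ => t; apply: ind_iff.
  by split=> [|[]//]; split=> //; apply: is_prefix_nil.
case/(reach_cat _ [:: x])=> b1 [ax xb].
have a_nz : ~ is_zero lt a by move=> a0; move: (reach_zero_nil a0 ax).
apply: (@branching_inB _ _ 0 [:: x] a_nz); split.
- by apply: indF => -[[w]].
- move=> y t no_child; apply: indF => -[_ /(valid_cat a [:: y] t)[b' [ay _]]].
  by apply: no_child; exists b'.
- move=> y b' ay; case: (classic (y = x)) => [eyx|nyx].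
    subst y; rewrite (reach_det ay ax); apply: ext_pred (IH _ xb) _ => t; apply: ind_iff.
    by rewrite is_prefix_cons (valid_child t ax); split=> [[]|[[]]].
  apply: ext_pred (inB0 b') _ => t; symmetry; apply: indF => -[/is_prefix_cons[eyx _] _].
  by apply: nyx.
- move=> y b' ay y_x t; split=> _; apply: indF => -[/is_prefix_cons[eyx _] _];
    by apply: y_x; left.
Qed.

Lemma is_aug_cone a x s b : reach a (x :: s) b -> is_aug a (cone a (x :: s)) 0.
Proof.
move=> axs; have a_nz : ~ is_zero lt a by move=> a0; move: (reach_zero_nil a0 axs).
split=> // _; exists [:: x] => y b' ay y_x t.
by split=> _; apply: indF => -[/is_prefix_cons[eyx _] _]; apply: y_x; left.
Qed.

Lemma branching_oneB a g c t : ~ is_zero lt a -> branching a g c [::] -> g t = c * oneB a t.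
Proof.
move=> a_nz [g_nil g_out _ g_const]; case: t => [|x t].
  by rewrite g_nil /oneB indF ?mulr0 // => /valid_reach[z [/reach_nil_inv <-]].
case: (classic (exists b, reach a [:: x] b)) => [[b ax]|no_child].
  have [g1 g2] := g_const x b ax id t.
  rewrite /oneB (ind_iff _ (valid_child t ax)); case: (classic (valid b t)) => [v|nv].
    by rewrite g1 // indT ?mulr1.
  by rewrite g2 // indF ?mulr0.
rewrite g_out // /oneB indF ?mulr0 // => /(valid_cat a [:: x] t)[b [ax _]].
by apply: no_child; exists b.
Qed.

Lemma branching_skip a g c x H : ~ (exists b, reach a [:: x] b) ->
  branching a g c (x :: H) -> branching a g c H.
Proof.
move=> no_child [g_nil g_out g_ch g_const]; split=> // y b ay y_H.
apply: (g_const _ _ ay) => /= -[eyx|//].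
by apply: no_child; exists b; rewrite eyx.
Qed.

Definition at_child (x : label) (h : fn) : fn :=
  fun t => ind K (is_prefix [:: x] t) * h (behead t).

Lemma at_child_nil x h : at_child x h [::] = 0.
Proof. by rewrite /at_child indF ?mul0r // => -[]. Qed.
Lemma at_child_cons x h t : at_child x h (x :: t) = h t.
Proof. by rewrite /at_child indT ?mul1r //; exists t. Qed.
Lemma at_child_other x y h t : y <> x -> at_child x h (y :: t) = 0.
Proof. by move=> nyx; rewrite /at_child indF ?mul0r // => /is_prefix_cons[/esym]. Qed.

Lemma branching_peel a g c x H bx : reach a [:: x] bx -> branching a g c (x :: H) ->
  branching a (fun t => g t - at_child x (fun t' => g (x :: t') - c * oneB bx t') t) c H.
Proof.
move=> ax [g_nil g_out g_ch g_const].
have g'_x t : g (x :: t) - at_child x (fun t' => g (x :: t') - c * oneB bx t') (x :: t) =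
    c * oneB bx t by rewrite at_child_cons opprB addrCA subrr addr0.
have g'_y y t h : y <> x -> g (y :: t) - at_child x h (y :: t) = g (y :: t).
  by move=> nyx; rewrite at_child_other // subr0.
have cOne : isConst bx c (fun t => c * oneB bx t).
  by have := isConst_op1 (mulr0 c) (isConst_oneB bx); rewrite mulr1.
split.
- by rewrite at_child_nil g_nil subr0.
- move=> y t no_child; rewrite g'_y ?g_out // => eyx.
  by apply: no_child; exists bx; rewrite eyx.
- move=> y b ay; case: (classic (y = x)) => [eyx|nyx]; last first.
    by apply: ext_pred (g_ch _ _ ay) _ => t; rewrite g'_y.
  subst y; rewrite (reach_det ay ax).
  by apply: ext_pred (inB_op1 (mulr0 c) (inB_oneB bx)) _ => t; rewrite g'_x.
- move=> y b ay y_H; case: (classic (y = x)) => [eyx|nyx]; last first.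
    apply: ext_pred (g_const _ _ ay _) _ => [|t]; last by rewrite g'_y.
    by case=> [exy|//]; apply: nyx.
  by subst y; rewrite (reach_det ay ax); apply: ext_pred cOne _ => t; rewrite g'_x.
Qed.

Section Bn.
Variables (alpha : T) (n : nat).
Notation Y := ('I_n * seq label)%type.
Notation fY := (Y -> K).
Notation A := (@Bn T lt K alpha n).

Lemma A_op2 (op : K -> K -> K) f g : op 0 0 = 0 -> A f -> A g -> A (fun y => op (f y) (g y)).
Proof. by move=> op00 Af Ag i; apply: (inB_op2 (op := op)). Qed.
Lemma A_op1 (u : K -> K) f : u 0 = 0 -> A f -> A (fun y => u (f y)).
Proof. by move=> u0 Af i; apply: (inB_op1 (u := u)). Qed.

Lemma A0 : A (fun _ => 0). Proof. by move=> i; apply: inB0. Qed.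
Lemma A_add f g : A f -> A g -> A (fun y => f y + g y).
Proof. by apply: (A_op2 (op := +%R)); rewrite addr0. Qed.
Lemma A_sub f g : A f -> A g -> A (fun y => f y - g y).
Proof. by apply: (A_op2 (op := fun x y => x - y)); rewrite subr0. Qed.
Lemma A_mul f g : A f -> A g -> A (fun y => f y * g y).
Proof. by apply: (A_op2 (op := *%R)); rewrite mulr0. Qed.
Lemma A_scale k f : A f -> A (fun y => k * f y).
Proof. by apply: (A_op1 (u := *%R k)); rewrite mulr0. Qed.

Lemma A_sum m (F : 'I_m -> fY) : (forall k, A (F k)) -> A (fun y => \sum_(k < m) F k y).
Proof.
elim: m F => [|m IH] F AF; first by apply: ext_pred A0 _ => y; rewrite big_ord0.
apply: ext_pred (A_add (IH (fun k => F (widen_ord (leqnSn m) k)) (fun k => AF _)) (AF ord_max)) _.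
by move=> y; rewrite big_ord_recr.
Qed.

Definition oneA : fY := fun y => oneB alpha y.2.

Lemma A_oneA : A oneA. Proof. by move=> i; apply: inB_oneB. Qed.

Lemma A_support f y : A f -> ~ valid alpha y.2 -> f y = 0.
Proof. by case: y => i t Af; apply: inB_support (Af i). Qed.

Lemma mul_oneA f y : A f -> oneA y * f y = f y.
Proof.
move=> Af; case: (classic (valid alpha y.2)) => [v|nv]; first by rewrite /oneA /oneB indT ?mul1r.
by rewrite (A_support Af nv) mulr0.
Qed.

(* Meant for [reach alpha s b]: the augmentation at the node [s] of the [i]-th factor. *)
Definition augn (f : fY) i s b := aug b (fun t => f (i, s ++ t)).

Section Augn.
Variables (i : 'I_n) (s : seq label) (b : T).
Hypothesis sb : reach alpha s b.

Lemma A_subtree f : A f -> inB b (fun t => f (i, s ++ t)).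
Proof. by move=> Af; apply: inB_subtree (Af i) sb. Qed.

Lemma augn_op2 (op : K -> K -> K) f g : op 0 0 = 0 -> A f -> A g ->
  augn (fun y => op (f y) (g y)) i s b = op (augn f i s b) (augn g i s b).
Proof. by move=> op00 Af Ag; apply: aug_op2 => //; apply: A_subtree. Qed.

Lemma augn_op1 (u : K -> K) f : u 0 = 0 -> A f -> augn (fun y => u (f y)) i s b = u (augn f i s b).
Proof. by move=> u0 Af; apply: aug_op1 => //; apply: A_subtree. Qed.

Lemma augn_add f g : A f -> A g -> augn (fun y => f y + g y) i s b = augn f i s b + augn g i s b.
Proof. by apply: (augn_op2 (op := +%R)); rewrite addr0. Qed.
Lemma augn_sub f g : A f -> A g -> augn (fun y => f y - g y) i s b = augn f i s b - augn g i s b.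
Proof. by apply: (augn_op2 (op := fun x y => x - y)); rewrite subr0. Qed.
Lemma augn_mul f g : A f -> A g -> augn (fun y => f y * g y) i s b = augn f i s b * augn g i s b.
Proof. by apply: (augn_op2 (op := *%R)); rewrite mulr0. Qed.
Lemma augn_scale k f : A f -> augn (fun y => k * f y) i s b = k * augn f i s b.
Proof. by apply: (augn_op1 (u := *%R k)); rewrite mulr0. Qed.

Lemma augn_sum m (F : 'I_m -> fY) : (forall k, A (F k)) ->
  augn (fun y => \sum_(k < m) F k y) i s b = \sum_(k < m) augn (F k) i s b.
Proof.
elim: m F => [|m IH] F AF.
  rewrite big_ord0 /augn -[RHS](aug0 b); congr aug.
  by apply: functional_extensionality => t; rewrite big_ord0.
rewrite big_ord_recr /= -(IH (fun k => F (widen_ord (leqnSn m) k))) // -augn_add //.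
  by rewrite /augn; congr aug; apply: functional_extensionality => t; rewrite big_ord_recr.
by apply: A_sum.
Qed.

End Augn.

Definition in_cone i s (y : Y) := [/\ y.1 = i, is_prefix s y.2 & valid alpha y.2].
Definition chi i s : fY := fun y => ind K (in_cone i s y).

Lemma A_chi i s b : reach alpha s b -> A (chi i s).
Proof.
move=> sb j; case: (classic (j = i)) => [<-|nji].
  by apply: ext_pred (inB_cone sb) _ => t; apply: ind_iff; split=> [[? ?]|[_ ? ?]]; split.
by apply: ext_pred (inB0 alpha) _ => t; symmetry; apply: indF => -[].
Qed.

Lemma augn_chi i s b j u b' : reach alpha s b -> reach alpha u b' ->
  augn (chi i s) j u b' = ind K (j = i /\ is_prefix s u).
Proof.
move=> sb ub'; rewrite /augn /chi /in_cone /=.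
case: (classic (j = i /\ is_prefix s u)) => [[-> su]|not_below].
  rewrite indT // (_ : (fun t => _) = oneB b') ?aug_oneB //.
  apply: functional_extensionality => t; rewrite -(oneB_cat t ub'); apply: ind_iff.
  by split=> [[]//|v]; split=> //; apply: is_prefix_trans su (is_prefix_catr u t).
rewrite indF //; case: (classic (j = i /\ is_prefix u s)) => [[eji [[|x w] esw]]|not_above].
- by case: not_below; rewrite esw cats0; split=> //; apply: is_prefix_refl.
- subst s j; case/reach_cat: sb => b1 [ub1 xwb]; rewrite -(reach_det ub' ub1) in xwb.
  rewrite (_ : (fun t => _) = cone b' (x :: w)); first exact: aug_eq (is_aug_cone xwb).
  apply: functional_extensionality => t; apply: ind_iff.
  split=> [[_ /is_prefix_cat2l ? /(valid_reach_cat _ ub') ?] //|[? ?]].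
  by split=> //; [apply/is_prefix_cat2l|apply/(valid_reach_cat _ ub')].
- rewrite -(aug0 b'); congr aug; apply: functional_extensionality => t.
  apply: indF => -[ej s_ut _]; case: (is_prefix_total s_ut (is_prefix_catr u t)) => ?.
  + exact: not_below.
  + exact: not_above.
Qed.

Definition down_closed (D : T -> Prop) := forall x y, lt x y -> D y -> D x.

Lemma down_closed_le D x y : down_closed D -> leX lt x y -> D y -> D x.
Proof. by move=> Dc [xy|->] //; apply: Dc. Qed.

Definition level_ideal (D : T -> Prop) (f : fY) :=
  A f /\ forall i s b, reach alpha s b -> ~ D b -> augn f i s b = 0.

Lemma level_ideal_op2 (op : K -> K -> K) D f g : op 0 0 = 0 ->
  level_ideal D f -> level_ideal D g -> level_ideal D (fun y => op (f y) (g y)).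
Proof.
move=> op00 [Af f0] [Ag g0]; split=> [|i s b sb nDb]; first exact: A_op2.
by rewrite augn_op2 // f0 // g0.
Qed.

Lemma level_ideal_add D f g :
  level_ideal D f -> level_ideal D g -> level_ideal D (fun y => f y + g y).
Proof. by apply: (level_ideal_op2 (op := +%R)); rewrite addr0. Qed.
Lemma level_ideal_sub D f g :
  level_ideal D f -> level_ideal D g -> level_ideal D (fun y => f y - g y).
Proof. by apply: (level_ideal_op2 (op := fun x y => x - y)); rewrite subr0. Qed.

Lemma level_ideal_mull D r f : A r -> level_ideal D f -> level_ideal D (fun y => r y * f y).
Proof.
move=> Ar [Af f0]; split=> [|i s b sb nDb]; first exact: A_mul.
by rewrite augn_mul // f0 // mulr0.
Qed.

Lemma level_ideal_scale D k f : level_ideal D f -> level_ideal D (fun y => k * f y).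
Proof.
move=> [Af f0]; split=> [|i s b sb nDb]; first exact: A_scale.
by rewrite augn_scale // f0 // mulr0.
Qed.

Lemma level_ideal0 D : level_ideal D (fun _ => 0).
Proof. by split=> [|i s b _ _]; [apply: A0|apply: aug0]. Qed.

Lemma level_ideal_subset (D D' : T -> Prop) f : (forall x, D x -> D' x) ->
  level_ideal D f -> level_ideal D' f.
Proof. by move=> DD' [Af f0]; split=> // i s b sb nD'b; apply: f0 => // /DD'. Qed.

Lemma level_ideal_chi D i s b : down_closed D -> reach alpha s b -> D b -> level_ideal D (chi i s).
Proof.
move=> Dc sb Db; split=> [|j u b' ub' nDb']; first exact: A_chi sb.
rewrite (augn_chi i j sb ub') indF // => -[_ [w ew]]; subst u.
case/reach_cat: ub' => b1 [sb1 wb']; rewrite -(reach_det sb sb1) in wb'.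
exact: nDb' (down_closed_le Dc (reach_le wb') Db).
Qed.

Lemma level_ideal_none f : level_ideal (fun _ => False) f -> forall y, f y = 0.
Proof.
move=> [Af f0] [j t]; case: (classic (valid alpha t)) => [|nv]; last exact: A_support.
case/valid_reach=> z [tz z0]; have [fz _] := aug_is_aug (A_subtree j tz Af).
by rewrite -[t]cats0 (fz z0); apply: f0 tz id.
Qed.

Definition cone_at (D : T -> Prop) (h : fY) :=
  exists i s b, [/\ reach alpha s b, D b & h = chi i s].

Lemma level_ideal_span D f : down_closed D -> span (cone_at D) f -> level_ideal D f.
Proof.
move=> Dc; elim=> [|c g f' [i [s [b [sb Db ->]]]] _ If']; first exact: level_ideal0.
by apply: level_ideal_add If'; apply: level_ideal_scale; apply: level_ideal_chi sb Db.
Qed.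

Definition graft i s (g : fn) : fY :=
  fun y => ind K (y.1 = i /\ is_prefix s y.2) * g (drop (size s) y.2).

Lemma graft_sub i s f g y : graft i s (fun t => f t - g t) y = graft i s f y - graft i s g y.
Proof. exact: mulrBr. Qed.

Lemma graft_oneB i s a y : reach alpha s a -> graft i s (oneB a) y = chi i s y.
Proof.
case: y => j t sa; rewrite /graft /chi /in_cone /=.
case: (classic (is_prefix s t)) => [[w ->]|nst]; last first.
  by rewrite indF ?mul0r ?indF // => -[].
rewrite drop_size_cat // -(oneB_cat w sa) /oneB -ind_and; apply: ind_iff.
by split=> [[[-> st] v]|[-> st v]]; split.
Qed.

Lemma graft_at_child i s x h y : graft i s (at_child x h) y = graft i (rcons s x) h y.
Proof.
case: y => j t; rewrite /graft /at_child /=.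
case: (classic (is_prefix s t)) => [[w ->]|nst]; last first.
  have nsxt : ~ is_prefix (rcons s x) t.
    move=> sxt; apply: nst; apply: (is_prefix_trans _ sxt).
    by rewrite -cats1; apply: is_prefix_catr.
  have [-> ->] : ind K (j = i /\ is_prefix s t) = 0 /\ ind K (j = i /\ is_prefix (rcons s x) t) = 0.
    by split; apply: indF => -[_]; [apply: nst|apply: nsxt].
  by rewrite !mul0r.
rewrite size_rcons -add1n -drop_drop !drop_size_cat // drop1 mulrA -ind_and.
rewrite -cats1; congr (_ * _); apply: ind_iff; split.
  by case=> -[eji _] xw; split=> //; apply/is_prefix_cat2l.
by case=> eji /is_prefix_cat2l xw; do !split=> //; apply: is_prefix_catr.
Qed.

Lemma sum_graft_nil f y : \sum_(i < n) graft i [::] (fun t => f (i, t)) y = f y.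
Proof.
case: y => j t; rewrite (bigD1 j) //= big1 ?addr0 => [|i nij].
  by rewrite /graft indT ?mul1r ?drop0 //; split=> //; apply: is_prefix_nil.
by rewrite /graft indF ?mul0r // => -[/= eji]; move: nij; rewrite eji eqxx.
Qed.

Lemma span_graft_branching B i s0 a g c H : ~ is_zero lt a -> reach alpha s0 a ->
  branching a g c H -> span B (fun y => c * chi i s0 y) ->
  (forall x b, reach a [:: x] b ->
     span B (graft i (rcons s0 x) (fun t => g (x :: t) - c * oneB b t))) ->
  span B (graft i s0 g).
Proof.
move=> a_nz s0a; elim: H g => [|x H IH] g g_br top children.
  apply: ext_pred top _ => y; rewrite -(graft_oneB i y s0a) /graft.
  by rewrite (branching_oneB _ a_nz g_br) mulrCA.
case: (classic (exists b, reach a [:: x] b)) => [[bx ax]|no_child]; last first.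
  exact: IH (branching_skip no_child g_br) top children.
pose h t := g (x :: t) - c * oneB bx t.
have g'_span : span B (graft i s0 (fun t => g t - at_child x h t)).
  apply: IH (branching_peel ax g_br) top _ => y b ay.
  case: (classic (y = x)) => [eyx|nyx]; last first.
    apply: ext_pred (children _ _ ay) _ => z; rewrite /graft; congr (_ * _).
    by rewrite at_child_other // subr0.
  subst y; rewrite (reach_det ay ax); apply: ext_pred (span0 B) _ => z.
  by rewrite /graft at_child_cons /h opprB addrCA subrr addr0 subrr mulr0.
apply: ext_pred (span_add g'_span (children _ _ ax)) _ => y.
by rewrite graft_sub graft_at_child subrK.
Qed.

Lemma span_graft D i a g s0 : down_closed D -> inB a g -> reach alpha s0 a ->
  (forall s b, reach a s b -> ~ D b -> aug b (fun t => g (s ++ t)) = 0) ->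
  span (cone_at D) (graft i s0 g).
Proof.
move=> Dc; elim: a / (wo_wf wo) g s0 => a _ IH g s0 g_a s0a g_aug.
have c0_or_Da : aug a g = 0 \/ D a.
  by case: (classic (D a)) => [|nDa]; [right|left; apply: g_aug (reach_nil a) nDa].
have top : span (cone_at D) (fun y => aug a g * chi i s0 y).
  case: c0_or_Da => [->|Da]; first by apply: ext_pred (span0 _) _ => y; rewrite mul0r.
  by apply: span_scale; apply: span_gen; exists i, s0, a.
case: (classic (is_zero lt a)) => [a0|a_nz].
  apply: ext_pred top _ => y; rewrite (aug_zero _ a0) -(graft_oneB i y s0a) /graft.
  by rewrite [in RHS](inB_zero_oneB _ a0 g_a) mulrCA.
have [c [H g_br]] := inB_branching g_a a_nz.
have ac : aug a g = c by apply: aug_eq; split=> // _; exists H; case: g_br.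
have [_ _ g_ch _] := g_br.
rewrite ac in c0_or_Da top; apply: (span_graft_branching a_nz s0a g_br top) => x b ax.
apply: IH (reach_lt ax) _ _ _ _ _.
- apply: (inB_op2 (op := fun u v => u - v)); rewrite ?subr0 //; first exact: g_ch ax.
  by apply: (inB_op1 (u := *%R c)); rewrite ?mulr0 //; apply: inB_oneB.
- by rewrite -cats1; apply/reach_cat; exists a.
- move=> s b' sb' nDb'.
  have axs : reach a (x :: s) b' by apply/(reach_cat _ [:: x]); exists b.
  rewrite (aug_op2 (op := fun u v => u - v)) ?subr0 //; last 2 first.
  + exact: inB_subtree (g_ch _ _ ax) sb'.
  + by apply: inB_op1 (inB_subtree (inB_oneB b) sb'); rewrite mulr0.
  rewrite (aug_op1 (u := *%R c)) ?mulr0 //; last exact: inB_subtree (inB_oneB b) sb'.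
  rewrite (_ : (fun t => oneB b (s ++ t)) = oneB b') ?aug_oneB ?mulr1; last first.
    by apply: functional_extensionality => t; apply: oneB_cat.
  rewrite (g_aug _ _ axs nDb') sub0r; case: c0_or_Da => [->|Da]; first by rewrite oppr0.
  by case: nDb'; apply: down_closed_le Dc (reach_le axs) Da.
Qed.

Lemma span_level_ideal D f : down_closed D -> level_ideal D f -> span (cone_at D) f.
Proof.
move=> Dc [Af f_aug].
apply: ext_pred (span_sum (fun i => span_graft i Dc (Af i) (reach_nil alpha) _)) _.
  by move=> i s b sb nDb; apply: f_aug.
exact: sum_graft_nil.
Qed.

Lemma ideal_scale (J : fY -> Prop) k x : ideal A J -> J x -> J (fun t => k * x t).
Proof.
move=> IJ Jx; have [JA _ _ Jmul] := IJ.
apply: ext_pred (Jmul _ _ (A_scale k A_oneA) Jx) _ => t.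
by rewrite -mulrA mul_oneA //; apply: JA.
Qed.

Definition gen_ideal D h : fY -> Prop :=
  fun z => exists s r, [/\ level_ideal D s, A r & z = (fun y => s y + r y * h y)].

Lemma ideal_gen_ideal D h : A h -> ideal A (gen_ideal D h).
Proof.
move=> Ah; split.
- by move=> z [s [r [[As _] Ar ->]]]; apply: A_add As (A_mul Ar Ah).
- by exists (fun _ => 0), (fun _ => 0); split; [apply: level_ideal0|apply: A0|
    apply: functional_extensionality => y; rewrite mul0r addr0].
- move=> x z [s [r [Is Ar ->]]] [s' [r' [Is' Ar' ->]]].
  exists (fun y => s y - s' y), (fun y => r y - r' y); split.
  + exact: level_ideal_sub.
  + exact: A_sub.
  + by apply: functional_extensionality => y; rewrite mulrBl opprD addrACA.
- move=> q z Aq [s [r [Is Ar ->]]]; exists (fun y => q y * s y), (fun y => q y * r y); split.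
  + exact: level_ideal_mull.
  + exact: A_mul.
  + by apply: functional_extensionality => y; rewrite mulrDr mulrA.
Qed.

Lemma level_ideal_gen D h x : level_ideal D x -> gen_ideal D h x.
Proof.
move=> Ix; exists x, (fun _ => 0); split=> //; first exact: A0.
by apply: functional_extensionality => y; rewrite mul0r addr0.
Qed.

Lemma gen_ideal_self D h : A h -> gen_ideal D h h.
Proof.
move=> Ah; exists (fun _ => 0), oneA; split; [exact: level_ideal0|exact: A_oneA|].
by apply: functional_extensionality => y; rewrite add0r mul_oneA.
Qed.

Lemma gen_ideal_min D h (J : fY -> Prop) : ideal A J -> subset_f (level_ideal D) J -> J h ->
  subset_f (gen_ideal D h) J.
Proof.
move=> IJ DJ Jh z [s [r [Is Ar ->]]]; apply: (ideal_add IJ (DJ _ Is)).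
by have [_ _ _ Jmul] := IJ; apply: Jmul.
Qed.

Lemma not_level_ideal D g : A g -> ~ level_ideal D g ->
  exists j u b, [/\ reach alpha u b, ~ D b & augn g j u b != 0].
Proof.
move=> Ag nIg; apply: NNPP => no_node; apply: nIg; split=> // j u b ub nDb.
by apply: NNPP => /eqP gnz; apply: no_node; exists j, u, b.
Qed.

Lemma augn_chi_minimal D i s a0 j u b : down_closed D -> (forall c, lt c a0 -> D c) ->
  reach alpha s a0 -> reach alpha u b -> ~ D b -> augn (chi i s) j u b = ind K (j = i /\ u = s).
Proof.
move=> Dc below sa0 ub nDb; rewrite (augn_chi i j sa0 ub); apply: ind_iff.
split=> [[eji [w ew]]|[-> ->]]; last by split=> //; apply: is_prefix_refl.
split=> //; subst u; case/reach_cat: ub => b1 [sb1 wb]; rewrite -(reach_det sa0 sb1) in wb.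
by case: w wb => [|x w] wb; [rewrite cats0|case: nDb; apply: below (reach_lt wb)].
Qed.

Section MinimalLevel.
Variables (D : T -> Prop) (i : 'I_n) (s : seq label) (a0 : T).
Hypotheses (Dc : down_closed D) (nDa0 : ~ D a0) (below : forall c, lt c a0 -> D c).
Hypothesis sa0 : reach alpha s a0.

(* An element of [J] outside [I_D] is [s' + r chi] with [d], the augmentation of [r] at the
   apex, nonzero; then [r chi] lies in [J] and [chi - d^-1 r chi] in [I_D]. *)
Lemma gen_ideal_chi_sub J : ideal A J -> subset_f (level_ideal D) J ->
  subset_f J (gen_ideal D (chi i s)) -> ~ subset_f J (level_ideal D) -> J (chi i s).
Proof.
move=> IJ DJ JG notJD; have Achi := A_chi i sa0; have [JA _ Jsub Jmul] := IJ.
have [g [Jg nIg]] : exists g, J g /\ ~ level_ideal D g.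
  by apply: NNPP => h; apply: notJD => g Jg; apply: NNPP => nIg; apply: h; exists g.
have [s' [r [Is' Ar eg]]] := JG _ Jg.
have [j [u [b [ub nDb]]]] := not_level_ideal (JA _ Jg) nIg.
rewrite eg (augn_add j ub (proj1 Is') (A_mul Ar Achi)) (augn_mul j ub Ar Achi).
rewrite (proj2 Is' j u b ub nDb) add0r (augn_chi_minimal i j Dc below sa0 ub nDb).
case: (classic (j = i /\ u = s)) => [[-> eus]|ne]; last by rewrite indF ?mulr0 ?eqxx.
subst u; rewrite -(reach_det sa0 ub) indT // mulr1 => d_nz.
have J_rchi : J (fun y => r y * chi i s y).
  apply: ext_pred (Jsub _ _ (Jmul _ _ Achi Jg) (DJ _ (level_ideal_mull Achi Is'))) _ => y.
  by rewrite eg /= mulrDr addrAC subrr add0r mulrCA /chi ind_idem.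
pose d := augn r i s a0.
have Iq : level_ideal D (fun y => chi i s y - d^-1 * (r y * chi i s y)).
  split=> [|j' u' b' u'b' nDb']; first exact: A_sub Achi (A_scale _ (A_mul Ar Achi)).
  rewrite (augn_sub j' u'b' Achi (A_scale _ (A_mul Ar Achi))).
  rewrite (augn_scale j' u'b' _ (A_mul Ar Achi)).
  rewrite (augn_mul j' u'b' Ar Achi) (augn_chi_minimal i j' Dc below sa0 u'b' nDb').
  case: (classic (j' = i /\ u' = s)) => [[-> eus]|ne']; last by rewrite indF ?mulr0 ?subrr.
  by subst u'; rewrite -(reach_det sa0 u'b') indT // mulr1 mulVf ?subrr.
apply: ext_pred (ideal_add IJ (DJ _ Iq) (ideal_scale d^-1 IJ J_rchi)) _ => y.
by rewrite subrK.
Qed.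

Lemma minimal_chi : minimal_over A (level_ideal D) (gen_ideal D (chi i s)).
Proof.
have Achi := A_chi i sa0; split.
- exact: ideal_gen_ideal.
- by move=> x; apply: level_ideal_gen.
- exists (chi i s); split; first exact: gen_ideal_self.
  case=> _ /(_ i s a0 sa0 nDa0); rewrite (augn_chi_minimal i i Dc below sa0 sa0 nDa0) indT //.
  by move/eqP; rewrite oner_eq0.
- move=> J IJ DJ JG; case: (classic (subset_f J (level_ideal D))) => [|notJD]; [by left|right].
  exact: gen_ideal_min IJ DJ (gen_ideal_chi_sub IJ DJ JG notJD).
Qed.

End MinimalLevel.

Definition next_level (D : T -> Prop) b := D b \/ (forall c, lt c b -> D c).

Lemma down_closed_next D : down_closed D -> down_closed (next_level D).
Proof. by move=> Dc x y xy [Dy|below]; left; [apply: Dc xy Dy|apply: below]. Qed.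

(* Otherwise [y] is nonzero at a node of level [b] with some [b' < b] outside [D]; through a
   child of level at least [b'] on which [y] keeps that value, the cone [e] yields an ideal
   [I_D + A e y] strictly between [I_D] and [J]. *)
Lemma minimal_in_next D J y : down_closed D -> minimal_over A (level_ideal D) J -> J y ->
  level_ideal (next_level D) y.
Proof.
move=> Dc [IJ DJ _ Jmin] Jy; have [JA _ _ Jmul] := IJ; have Ay := JA _ Jy.
apply: NNPP => nIy; have [i [u [b [ub nDb c_nz]]]] := not_level_ideal Ay nIy.
have nDb' : ~ D b by move=> Db; apply: nDb; left.
have [b' [b'b nDb'']] : exists b', lt b' b /\ ~ D b'.
  by apply: NNPP => h; apply: nDb; right => c cb; apply: NNPP => nDc; apply: h; exists c.
have b_nz : ~ is_zero lt b by move=> b0; apply: b0 b'b.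
have [_ /(_ b_nz)[H y_const]] := aug_is_aug (A_subtree i ub Ay).
have [x [b1 [bx x_H b'b1]]] := child_above H b'b.
have nDb1 : ~ D b1 by move=> Db1; apply: nDb''; apply: down_closed_le Dc b'b1 Db1.
have uxb1 : reach alpha (rcons u x) b1 by rewrite -cats1; apply/reach_cat; exists b.
pose e := chi i (rcons u x); have Ae : A e := A_chi i uxb1.
have Aey : A (fun z => e z * y z) := A_mul Ae Ay.
have y_child : augn y i (rcons u x) b1 = augn y i u b.
  by apply: aug_const; apply: ext_pred (y_const _ _ bx x_H) _ => t /=; rewrite cat_rcons.
have e_child : augn e i (rcons u x) b1 = 1.
  by rewrite (augn_chi i i uxb1 uxb1) indT //; split=> //; apply: is_prefix_refl.
have e_node : augn e i u b = 0.
  by rewrite (augn_chi i i uxb1 ub) indF // => -[_ /is_prefix_size]; rewrite size_rcons ltnn.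
have JeyJ := gen_ideal_min IJ DJ (Jmul _ _ Ae Jy).
case: (Jmin _ (ideal_gen_ideal D Aey) (fun z => @level_ideal_gen D _ z) JeyJ) => [eyI|Jgen].
- have [_ ey0] := eyI _ (gen_ideal_self D Aey).
  move: (ey0 i _ _ uxb1 nDb1); rewrite (augn_mul i uxb1 Ae Ay) e_child y_child mul1r => c0.
  by move: c_nz; rewrite c0 eqxx.
- have [s [r [Is Ar ey]]] := Jgen _ Jy.
  move: c_nz; rewrite ey (augn_add i ub (proj1 Is) (A_mul Ar Aey)) (augn_mul i ub Ar Aey).
  by rewrite (augn_mul i ub Ae Ay) e_node (proj2 Is _ _ _ ub nDb') mul0r mulr0 addr0 eqxx.
Qed.

Lemma level_ideal_soc_next D x : down_closed D -> soc_next A (level_ideal D) x ->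
  level_ideal (next_level D) x.
Proof.
move=> Dc [Ax [m [J [y [s [Is Jy ex]]]]]]; split=> // i u b ub nDb.
have Ay k : A (y k) by have [[[JA _ _ _] _ _ _] yk] := Jy k; apply: JA.
rewrite (_ : x = fun t => s t + \sum_(k < m) y k t); last exact: functional_extensionality.
rewrite (augn_add i ub (proj1 Is) (A_sum Ay)) (augn_sum i ub Ay) big1 ?addr0.
  by apply: (proj2 Is) => // Db; apply: nDb; left.
by move=> k _; have [Jk yk] := Jy k; apply: (proj2 (minimal_in_next Dc Jk yk)).
Qed.

Lemma soc_next_level_ideal D x : level_ideal D x -> soc_next A (level_ideal D) x.
Proof.
move=> Ix; split; first by case: Ix.
exists 0%N, (fun _ _ => False), (fun _ _ => 0), x; split=> // [[]//|t].
by rewrite big_ord0 addr0.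
Qed.

Lemma soc_next_add D x1 x2 : soc_next A (level_ideal D) x1 -> soc_next A (level_ideal D) x2 ->
  soc_next A (level_ideal D) (fun t => x1 t + x2 t).
Proof.
move=> [Ax1 [m1 [J1 [y1 [s1 [Is1 Jy1 e1]]]]]] [Ax2 [m2 [J2 [y2 [s2 [Is2 Jy2 e2]]]]]].
split; first exact: A_add.
pose glue (T' : Type) (f1 : 'I_m1 -> T') (f2 : 'I_m2 -> T') k :=
  match split k with inl k1 => f1 k1 | inr k2 => f2 k2 end.
exists (m1 + m2)%N, (glue _ J1 J2), (glue _ y1 y2), (fun t => s1 t + s2 t); split.
- exact: level_ideal_add.
- by move=> k; rewrite /glue; case: (split k).
- move=> t; rewrite e1 e2 big_split_ord addrACA /glue; congr (_ + (_ + _)).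
  + by apply: eq_bigr => k _; rewrite (unsplitK (inl k)).
  + by apply: eq_bigr => k _; rewrite (unsplitK (inr k)).
Qed.

Lemma soc_next_chi D k i s b : down_closed D -> reach alpha s b -> next_level D b ->
  soc_next A (level_ideal D) (fun y => k * chi i s y).
Proof.
move=> Dc sb Nb; case: (classic (D b)) => [Db|nDb].
  by apply: soc_next_level_ideal; apply: level_ideal_scale; apply: level_ideal_chi sb Db.
have below : forall c, lt c b -> D c by case: Nb.
split; first exact: A_scale (A_chi i sb).
exists 1%N, (fun _ => gen_ideal D (chi i s)), (fun _ y => k * chi i s y), (fun _ => 0); split.
- exact: level_ideal0.
- move=> _; split; first exact: minimal_chi Dc nDb below sb.
  exists (fun _ => 0), (fun y => k * oneA y); split; [exact: level_ideal0|exact: A_scale A_oneA|].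
  by apply: functional_extensionality => y; rewrite add0r -mulrA mul_oneA //; apply: A_chi sb.
- by move=> t; rewrite big_ord1 add0r.
Qed.

Lemma socle_step D x : down_closed D ->
  soc_next A (level_ideal D) x <-> level_ideal (next_level D) x.
Proof.
move=> Dc; split; first exact: level_ideal_soc_next.
move/(span_level_ideal (down_closed_next Dc)); elim=> [|c g f [i [s [b [sb Nb ->]]]] _ Sf].
  exact: soc_next_level_ideal (level_ideal0 D).
by apply: soc_next_add Sf; apply: soc_next_chi sb Nb.
Qed.

Lemma span_cone_at_max D x : span (cone_at D) x ->
  (forall y, x y = 0) \/ exists2 M, D M & span (cone_at (fun b => leX lt b M)) x.
Proof.
elim=> [|c g f [i [s [b [sb Db ->]]]] _ [f0|[M DM Sf]]]; first by left.
  right; exists b => //; apply: ext_pred (span_cons c _ (span0 _)) _ => [|y]; last by rewrite f0.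
  by exists i, s, b; split=> //; right.
right; case: (wo_le_total wo b M) => [bM|Mb].
  by exists M => //; apply: span_cons Sf; exists i, s, b.
exists b => //; apply: span_cons; first by exists i, s, b; split=> //; right.
apply: span_trans Sf => g' [i' [s' [b' [s'b' b'M ->]]]]; apply: span_gen.
by exists i', s', b'; split=> //; apply: wo_le_trans b'M Mb.
Qed.

Lemma socle_seq_level_ideal (W : Type) (ltW : W -> W -> Prop) (S : W -> fY -> Prop) :
  is_wellorder ltW -> socle_seq A ltW S ->
  forall w, exists2 D, down_closed D & forall x, S w x <-> level_ideal D x.
Proof.
move=> woW Ssoc w; elim: w / (wo_wf woW) => w _ IH.
case: (ordinal_cases ltW w) => [w0|[[p p_w]|w_lim]].
- exists (fun _ => False) => // x; have [S0 _ _] := Ssoc w x; rewrite (S0 w0).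
  split=> [x0|/level_ideal_none]; last by [].
  by apply: ext_pred (level_ideal0 _) _ => y; rewrite x0.
- have [Dp Dpc Sp] := IH p (proj1 p_w).
  exists (next_level Dp) => [|x]; first exact: down_closed_next.
  have [_ Ssucc _] := Ssoc w x; rewrite (Ssucc p p_w) -(socle_step x Dpc).
  suff -> : S p = level_ideal Dp by [].
  by apply: functional_extensionality => z; apply: propositional_extensionality.
- pose D a := exists2 v, ltW v w &
    exists2 Dv, down_closed Dv /\ (forall x, S v x <-> level_ideal Dv x) & Dv a.
  have Dc : down_closed D.
    move=> a1 a2 a12 [v vw [Dv [Dvc Sv] Dva2]].
    by exists v => //; exists Dv => //; apply: Dvc a12 Dva2.
  exists D => // x; have [_ _ Slim] := Ssoc w x; rewrite (Slim w_lim); split.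
    move=> [v [vw Svx]]; have [Dv Dvc Sv] := IH v vw.
    apply: level_ideal_subset (proj1 (Sv x) Svx) => a Dva.
    by exists v => //; exists Dv.
  move=> /(span_level_ideal Dc)/span_cone_at_max[x0|[M [v vw [Dv [Dvc Sv] DvM]] SM]].
    have [v vw] := nonzero_has_lt (limit_not_zero w_lim); have [Dv _ Sv] := IH v vw.
    by exists v; split=> //; apply/Sv; apply: ext_pred (level_ideal0 _) _ => y; rewrite x0.
  exists v; split=> //; apply/Sv; apply: (level_ideal_span Dvc).
  apply: span_trans SM => g [i [s [b [sb bM ->]]]]; apply: span_gen.
  by exists i, s, b; split=> //; apply: down_closed_le Dvc bM DvM.
Qed.

Section Basis.
Hypothesis n_pos : (0 < n)%N.

Definition i0 : 'I_n := Ordinal n_pos.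
Definition s0 : seq label := epsilon (inhabits [::]) (valid alpha).
Definition p0 : Y := (i0, s0).

Lemma s0_valid : valid alpha s0.
Proof. exact: epsilon_spec (valid_ex alpha). Qed.

Lemma in_cone_p0 y : in_cone i0 s0 y <-> y = p0.
Proof.
case: y => j t; split=> [[/= -> s0t vt]|[-> ->]]; last first.
  by split=> //; [apply: is_prefix_refl|apply: s0_valid].
by rewrite /p0 (valid_prefix_eq s0_valid vt s0t).
Qed.

(* Disjoint cones multiply to [0], which is not a basis element; adjoining the point [p0] to
   every cone makes the product of two basis elements the indicator of [{p0}] instead. *)
Definition gB i s : fY := fun y => ind K (in_cone i s y \/ y = p0).

Definition basis (h : fY) := exists i s b, reach alpha s b /\ h = gB i s.

Lemma gB_chi i s y : gB i s y = chi i s y + ind K (~ in_cone i s p0) * chi i0 s0 y.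
Proof.
rewrite /gB /chi (ind_iff _ (in_cone_p0 y)).
case: (classic (y = p0)) => [->|nyp0]; last first.
  by rewrite (indF _ nyp0) mulr0 addr0; apply: ind_iff; tauto.
rewrite (indT _ (or_intror erefl)) (indT _ (erefl p0)) mulr1.
case: (classic (in_cone i s p0)) => [p0s|np0s].
  by rewrite (indT _ p0s) (indF _ (fun h => h p0s)) addr0.
by rewrite (indF _ np0s) (indT _ np0s) add0r.
Qed.

Lemma gB_p0 y : gB i0 s0 y = chi i0 s0 y.
Proof. by rewrite gB_chi indF ?mul0r ?addr0 //; apply; apply/in_cone_p0. Qed.

Lemma s0_level : exists2 z, reach alpha s0 z & is_zero lt z.
Proof. by have [z [s0z z0]] := proj1 (valid_reach _ _) s0_valid; exists z. Qed.

Lemma A_gB i s b : reach alpha s b -> A (gB i s).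
Proof.
move=> sb; have [z s0z _] := s0_level.
apply: ext_pred (A_add (A_chi i sb) (A_scale _ (A_chi i0 s0z))) _ => y.
by rewrite gB_chi.
Qed.

Lemma level_ideal_gB D i s b : down_closed D -> reach alpha s b -> D b -> level_ideal D (gB i s).
Proof.
move=> Dc sb Db; have [z s0z z0] := s0_level.
have Dz : D z by apply: down_closed_le Dc (wo_nlt_le wo (z0 b)) Db.
apply: ext_pred (level_ideal_add (level_ideal_chi i Dc sb Db) _) _ => [|y]; last by rewrite gB_chi.
exact: level_ideal_scale (level_ideal_chi i0 Dc s0z Dz).
Qed.

Lemma span_basis D x : down_closed D -> level_ideal D x ->
  span (fun h => basis h /\ level_ideal D h) x.
Proof.
move=> Dc Ix; case: (classic (exists b, D b)) => [[b Db]|noD]; last first.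
  have x0 := level_ideal_none (level_ideal_subset (fun b Db => noD (ex_intro _ b Db)) Ix).
  by apply: ext_pred (span0 _) _ => y; rewrite x0.
have [z s0z z0] := s0_level.
have Dz : D z by apply: down_closed_le Dc (wo_nlt_le wo (z0 b)) Db.
have gen i s b' : reach alpha s b' -> D b' -> span (fun h => basis h /\ level_ideal D h) (gB i s).
  by move=> sb' Db'; apply: span_gen; split; [exists i, s, b'|apply: level_ideal_gB sb' Db'].
apply: span_trans (span_level_ideal Dc Ix) => _ [i [s [b' [sb' Db' ->]]]].
apply: ext_pred (span_add (gen i s b' sb' Db') (span_scale (- ind K (~ in_cone i s p0))
  (gen i0 s0 z s0z Dz))) _ => y.
by rewrite gB_p0 gB_chi mulNr addrK.
Qed.

Lemma basis_strong_mult : strong_mult basis.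
Proof.
move=> _ _ [i [s [b [sb ->]]]] [j [u [b' [ub' ->]]]].
have gB_mul k v :
    (forall y, in_cone i s y /\ in_cone j u y \/ y = p0 <-> in_cone k v y \/ y = p0) ->
    (fun y => gB i s y * gB j u y) = gB k v.
  by move=> e; apply: functional_extensionality => y; rewrite /gB ind_or_mul; apply: ind_iff.
case: (classic (i = j /\ is_prefix s u)) => [[eij su]|nsu].
  subst j; exists i, u, b'; split=> //; apply: gB_mul => y; split=> [[[]|]|[in_u|]]; auto.
  by left; split=> //; case: in_u => ei uy vy; split=> //; apply: is_prefix_trans su uy.
case: (classic (i = j /\ is_prefix u s)) => [[eij us]|nus].
  subst j; exists i, s, b; split=> //; apply: gB_mul => y; split=> [[[]|]|[in_s|]]; auto.
  by left; split=> //; case: in_s => ei sy vy; split=> //; apply: is_prefix_trans us sy.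
have [z s0z _] := s0_level; exists i0, s0, z; split=> //; apply: gB_mul => y.
rewrite (in_cone_p0 y); split=> [[[[/= ei sy _] [/= ej uy _]]|]|[]]; auto.
by case: (is_prefix_total sy uy) => ?; [case: nsu|case: nus]; rewrite -ei -ej.
Qed.

(* Triangularity: at a point of the cone of [nd j] that avoids every strictly deeper node,
   only [gB] of [nd j] and of shorter nodes are nonzero. *)
Lemma basis_coef_node k (nd : 'I_k -> 'I_n * seq label) (c : 'I_k -> K) :
  injective nd -> (forall j, exists b, reach alpha (nd j).2 b) ->
  (forall y, \sum_(j < k) c j * gB (nd j).1 (nd j).2 y = 0) ->
  forall j, nd j <> p0 -> c j = 0.
Proof.
move=> nd_inj nd_reach sum0 j; have [N] := ubnP (size (nd j).2); elim: N j => // N IH j.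
case E : (nd j) => [i sg] /= sgN nd_p0; have [b sgb] := nd_reach j; rewrite E /= in sgb.
have [t [vt t_priv]] := avoid_extensions b sg (s0 :: [seq (nd j').2 | j' <- enum 'I_k]).
have vy : valid alpha (sg ++ t) by apply/(valid_reach_cat _ sgb).
have s0_far : i = i0 -> ~ is_prefix s0 (sg ++ t).
  move=> ei s0y; have es0 := valid_prefix_eq s0_valid vy s0y.
  move: (is_prefix_size (t_priv _ (or_introl erefl) s0y)).
  rewrite es0 size_cat -{2}[size sg]addn0 leq_add2l leqn0 => /nilP t0.
  by apply: nd_p0; rewrite /p0 ei es0 t0 cats0.
have := sum0 (i, sg ++ t); rewrite (bigD1 j) //= big1 ?addr0.
  by rewrite E /gB indT ?mulr1 //; left; split=> //; apply: is_prefix_catr.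
move=> j' nj'j; case E' : (nd j') => [i' sg']; rewrite /gB.
case: (classic (in_cone i' sg' (i, sg ++ t) \/ (i, sg ++ t) = p0)) => [[|]|nP]; last first.
- by rewrite indF ?mulr0.
- by case=> ei ey; case: (s0_far ei); rewrite -ey; apply: is_prefix_refl.
case=> /= ei' sg'y _.
have sg'sg : is_prefix sg' sg.
  apply: t_priv sg'y; right; have -> : sg' = (nd j').2 by rewrite E'.
  by apply: inList_map; apply: inList_mem; rewrite mem_enum.
have sg'_ne : sg' <> sg.
  by move=> esg; move/eqP: nj'j; apply; apply: nd_inj; rewrite E E' ei' esg.
suff -> : c j' = 0 by rewrite mul0r.
apply: IH; rewrite E' /=.
- rewrite -ltnS (leq_trans _ sgN) // ltnS ltn_neqAle (is_prefix_size sg'sg) andbT.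
  by apply/eqP => /(is_prefix_size_eq sg'sg).
- by rewrite /p0 => -[ei0 es0]; case: (s0_far (etrans ei' ei0)); rewrite -es0.
Qed.

Lemma basis_lin_indep : lin_indep basis.
Proof.
move=> k v c v_inj v_basis sum0.
have [nd nd_spec] : exists nd : 'I_k -> 'I_n * seq label,
    forall j, (exists b, reach alpha (nd j).2 b) /\ v j = gB (nd j).1 (nd j).2.
  apply: (ClassicalEpsilon.choice (fun j p => (exists b, reach alpha p.2 b) /\ v j = gB p.1 p.2)).
  by move=> j; have [i [s [b [sb ->]]]] := v_basis j; exists (i, s); split=> //; exists b.
have nd_inj : injective nd.
  by move=> j j' e; apply: v_inj; rewrite (proj2 (nd_spec j)) (proj2 (nd_spec j')) e.
have sum0' y : \sum_(j < k) c j * gB (nd j).1 (nd j).2 y = 0.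
  by rewrite -[RHS](sum0 y); apply: eq_bigr => j _; rewrite (proj2 (nd_spec j)).
have c_node := basis_coef_node nd_inj (fun j => proj1 (nd_spec j)) sum0'.
move=> j; case: (classic (nd j = p0)) => [ej|]; last exact: c_node.
have := sum0' p0; rewrite (bigD1 j) //= big1 ?addr0 => [|j' nj'j].
  by rewrite /gB indT ?mulr1 //; right.
rewrite c_node ?mul0r // => ej'.
by move/eqP: nj'j; apply; apply: nd_inj; rewrite ej ej'.
Qed.

Lemma is_basis_level_ideal D : down_closed D ->
  is_basis (level_ideal D) (fun h => basis h /\ level_ideal D h).
Proof.
move=> Dc; split; first by move=> h [].
  by apply: lin_indep_sub basis_lin_indep => h [].
by move=> x Ix; apply: span_spans (span_basis Dc Ix).
Qed.

Lemma is_basis_A : is_basis A basis.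
Proof.
split; first by move=> _ [i [s [b [sb ->]]]]; apply: A_gB sb.
  exact: basis_lin_indep.
move=> x Ax; apply: span_spans.
have Ix : level_ideal (fun _ => True) x by split=> // i s b _ [].
by apply: span_trans (span_basis (fun _ _ _ _ => I) Ix) => h [Bh _]; apply: span_gen.
Qed.

End Basis.
End Bn.
End TreeAlgebra.
End Paths.

Theorem lemma6p7 (K : fieldType) (T : Type) (lt : T -> T -> Prop) (alpha : T) (n : nat) :
  is_wellorder lt -> (0 < n)%N ->
  exists B : ('I_n * seq (label T) -> K) -> Prop,
    [/\ is_basis (@Bn T lt K alpha n) B, strong_mult B & conormed (@Bn T lt K alpha n) B].
Proof.
move=> wo n_pos; exists (basis lt alpha n_pos); split.
- exact: is_basis_A.
- exact: basis_strong_mult.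
move=> W ltW woW S Ssoc w; have [D Dc SD] := socle_seq_level_ideal wo woW Ssoc w.
exists (fun h => basis lt alpha n_pos h /\ level_ideal lt alpha D h); split; first by move=> h [].
have [sub indep spanD] := is_basis_level_ideal wo K alpha n_pos Dc.
by split=> // [h /sub /SD|x /SD /spanD].
Qed.
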